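(* For any $1\leq j<i<n$, the following equalities hold in $U^{\mathrm{rtt}}_v(L\mathfrak{gl}_n)$: $$\tilde e^\pm_{j,i+1}(z)=\frac{[\tilde e^{(0)}_{i,i+1},\tilde e^\pm_{ji}(z)]_{v^{-1}}}{v-v^{-1}},\qquad \tilde f^\pm_{i+1,j}(z)=\frac{[\tilde f^\pm_{ij}(z),\tilde f^{(0)}_{i+1,i}]_v}{v^{-1}-v}$$ (each for both signs $\pm$).
   Context: Let $v$ be a formal variable, $E_{ij}$ matrix units, $[a,b]_x=ab-x\,ba$. Let $R_{\mathrm{trig}}(z,w)=(vz-v^{-1}w)\sum_iE_{ii}\otimes E_{ii}+(z-w)\sum_{i\neq j}E_{ii}\otimes E_{jj}+(v-v^{-1})z\sum_{i<j}E_{ij}\otimes E_{ji}+(v-v^{-1})w\sum_{i>j}E_{ij}\otimes E_{ji}$. $\mathfrak{U}^{\mathrm{rtt}}_v(L\mathfrak{gl}_n)$ is the $\mathbb{C}[v,v^{-1}]$-algebra generated by $\{t^\pm_{ij}[\pm r]\}_{1\leq i,j\leq n}^{r\in\mathbb{N}}$ with relations $t^\pm_{ii}[0]t^\mp_{ii}[0]=1$; $t^+_{ij}[0]=t^-_{ji}[0]=0$ for $j<i$; $R_{\mathrm{trig}}(z,w)T^\epsilon_1(z)T^{\epsilon'}_2(w)=T^{\epsilon'}_2(w)T^\epsilon_1(z)R_{\mathrm{trig}}(z,w)$ for $(\epsilon,\epsilon')\in\{(+,+),(-,-),(-,+)\}$, where $T^\pm(z)=\sum_{i,j}t^\pm_{ij}(z)\otimes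 E_{ij}$, $t^\pm_{ij}(z)=\sum_{r\geq0}t^\pm_{ij}[\pm r]z^{\mp r}$. $U^{\mathrm{rtt}}_v(L\mathfrak{gl}_n)=\mathfrak{U}^{\mathrm{rtt}}_v(L\mathfrak{gl}_n)\otimes_{\mathbb{C}[v,v^{-1}]}\mathbb{C}(v)$. Gauss decomposition: $T^\pm(z)=\tilde F^\pm(z)\tilde G^\pm(z)\tilde E^\pm(z)$ with $\tilde F^\pm(z)=\sum_iE_{ii}+\sum_{i>j}\tilde f^\pm_{ij}(z)E_{ij}$, $\tilde G^\pm(z)=\sum_i\tilde g^\pm_i(z)E_{ii}$, $\tilde E^\pm(z)=\sum_iE_{ii}+\sum_{i<j}\tilde e^\pm_{ij}(z)E_{ij}$ (series in $z^{\mp1}$). Write $\tilde e^+_{ij}(z)=\sum_{r\geq0}\tilde e^{(r)}_{ij}z^{-r}$, $\tilde e^-_{ij}(z)=\sum_{r<0}\tilde e^{(r)}_{ij}z^{-r}$, $\tilde f^+_{ij}(z)=\sum_{r>0}\tilde f^{(r)}_{ij}z^{-r}$, $\tilde f^-_{ij}(z)=\sum_{r\leq0}\tilde f^{(r)}_{ij}z^{-r}$. *)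

From mathcomp Require Import all_boot all_order all_algebra.
From mathcomp Require Import complex Rstruct.
Set Implicit Arguments. Unset Strict Implicit. Unset Printing Implicit Defensive.
Import Order.TTheory GRing.Theory Num.Theory.
Local Open Scope ring_scope.

Definition Cnum : fieldType := complex Rdefinitions.R.
Definition Cv : fieldType := {fraction {poly Cnum}}.
Definition vq : Cv := FracField.tofrac ('X : {poly Cnum}).

Section RTT.
Variable K : fieldType.
Variable A : algType K.
Variable n : nat.

(* Entry of R_trig(z,w) at row (a,b), column (c,d) w.r.t. the basis
   E_ac (x) E_bd : returned as the pair (coefficient of z, coefficient of w). *)
Definition Rtrig_coef (v : K) (a b c d : 'I_n) : K * K :=
  if (a == c) && (b == d) then
    (if a == b then (v, - v^-1) else (1, -1))
  else if (a == d) && (b == c) then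
    (if (a < b)%N then (v - v^-1, 0) else (0, v - v^-1))
  else (0, 0).

(* A one-variable formal series, indexed by the integer exponent k of z^k. *)
(* T^+(z) = sum_{r>=0} t^+[r] z^{-r}; tp i j r := t^+_{ij}[r]. *)
Definition ser_plus (tp : 'I_n -> 'I_n -> nat -> A) : 'I_n -> 'I_n -> int -> A :=
  fun i j k => if (k <= 0)%R then tp i j `|k|%N else 0.
(* T^-(z) = sum_{r>=0} t^-[-r] z^{r}; tm i j r := t^-_{ij}[-r]. *)
Definition ser_minus (tm : 'I_n -> 'I_n -> nat -> A) : 'I_n -> 'I_n -> int -> A :=
  fun i j k => if (0 <= k)%R then tm i j `|k|%N else 0.

(* The relation R(z,w) T1_1(z) T2_2(w) = T2_2(w) T1_1(z) R(z,w), compared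
   coefficientwise at z^k w^l (entry ((a,b),(p,q))).  Multiplication by z
   shifts the z-exponent: [z X]_(k,l) = X_(k-1,l). *)
Definition RTT_rel (v : K) (T1 T2 : 'I_n -> 'I_n -> int -> A) : Prop :=
  forall (a b p q : 'I_n) (k l : int),
    \sum_(c < n) \sum_(d < n)
       ((Rtrig_coef v a b c d).1 *: (T1 c p (k - 1) * T2 d q l)
      + (Rtrig_coef v a b c d).2 *: (T1 c p k * T2 d q (l - 1)))
  = \sum_(c < n) \sum_(d < n)
       ((Rtrig_coef v c d p q).1 *: (T2 b d l * T1 a c (k - 1))
      + (Rtrig_coef v c d p q).2 *: (T2 b d (l - 1) * T1 a c k)).

(* The defining relations of U^rtt_v(Lgl_n) (over K, with parameter v),
   for generators tp i j r = t^+_{ij}[r], tm i j r = t^-_{ij}[-r]. *)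
Definition rtt_relations (v : K) (tp tm : 'I_n -> 'I_n -> nat -> A) : Prop :=
  [/\ (forall i, tp i i 0%N * tm i i 0%N = 1 /\ tm i i 0%N * tp i i 0%N = 1),
      (forall i j : 'I_n, (j < i)%N -> tp i j 0%N = 0 /\ tm j i 0%N = 0),
      RTT_rel v (ser_plus tp) (ser_plus tp),
      RTT_rel v (ser_minus tm) (ser_minus tm) &
      RTT_rel v (ser_minus tm) (ser_plus tp)].

(* Gauss decomposition T(z) = F(z) G(z) E(z) of a matrix of one-variable
   series, all indexed by r = the power of z^{-1} (for "+") or of z (for "-").
   f i j r (i > j) are the entries of F, g i r of G, e i j r (i < j) of E. *)
Definition Fmat (f : 'I_n -> 'I_n -> nat -> A) (i j : 'I_n) (r : nat) : A :=
  if (j < i)%N then f i j r else if i == j then (if r == 0%N then 1 else 0) else 0.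
Definition Emat (e : 'I_n -> 'I_n -> nat -> A) (i j : 'I_n) (r : nat) : A :=
  if (i < j)%N then e i j r else if i == j then (if r == 0%N then 1 else 0) else 0.

Definition gauss_decomp (t : 'I_n -> 'I_n -> nat -> A)
    (f : 'I_n -> 'I_n -> nat -> A) (g : 'I_n -> nat -> A)
    (e : 'I_n -> 'I_n -> nat -> A) : Prop :=
  forall (a b : 'I_n) (r : nat),
    t a b r = \sum_(c < n) \sum_(0 <= r1 < r.+1) \sum_(0 <= r2 < (r - r1).+1)
                 Fmat f a c r1 * g c r2 * Emat e c b (r - r1 - r2).

End RTT.

From mathcomp Require Import all_boot all_order all_algebra.
From mathcomp Require Import complex Rstruct.
Import Order.TTheory GRing.Theory Num.Theory.
Set Implicit Arguments. Unset Strict Implicit.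
Local Open Scope ring_scope.

(* Write T(z) = F(z) G(z) E(z).  In the RTT relation between T(z) and T^+(w) the
   coefficient of w^1 only sees the constant term T^+[0], because T^+(w) has no positive
   powers of w; likewise the coefficient of z^0 in the relation between T^-(z) and T(w)
   only sees T^-[0].  As T^+[0] is upper triangular, this shows that
   e0 = t_ii^-1 t_{i,i+1} (entries of T^+[0]) commutes with the leading i x i block of
   T(z) and that [e0, t_{a,i}(z)]_{v^-1} = (v - v^-1) t_{a,i+1}(z) for a < i.  The Gauss
   factors of a leading block are those of the block, and the unitriangular F together
   with the invertible G(0) can be cancelled order by order, so both facts pass from the
   entries of T to those of E.  Dually for F, with f0 = t_{i+1,i} t_ii^-1 taken in
   T^-[0].  Finally the z^0 part of the Gauss decompositions identifies e^(0)_{i,i+1}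
   with e0 and f^(0)_{i+1,i} with f0. *)

Section Convolution.
Variable R : pzRingType.
Implicit Types (f h : nat -> R) (x u : R).

Definition conv f h (r : nat) : R := \sum_(0 <= s < r.+1) f s * h (r - s)%N.

Definition delta0 : nat -> R := fun s => if s == 0%N then 1 else 0.

Lemma eq_conv f1 f2 h1 h2 : f1 =1 f2 -> h1 =1 h2 -> conv f1 h1 =1 conv f2 h2.
Proof. by move=> ef eh r; apply: eq_bigr => s _; rewrite ef eh. Qed.

Lemma conv_delta0l f h : f =1 delta0 -> conv f h =1 h.
Proof.
move=> ef r; rewrite /conv big_nat_recl // ef subn0 mul1r big1 ?addr0 // => s _.
by rewrite ef mul0r.
Qed.

Lemma conv_delta0r f h : h =1 delta0 -> conv f h =1 f.
Proof.
move=> eh r; rewrite /conv big_nat_recr //= eh subnn mulr1 big_nat big1 ?add0r // => s /andP[_ sr].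
by rewrite eh /delta0 subn_eq0 leqNgt sr mulr0.
Qed.

Lemma conv0l f h r : f =1 (fun=> 0) -> conv f h r = 0.
Proof. by move=> ef; apply: big1 => s _; rewrite ef mul0r. Qed.

Lemma conv0r f h r : h =1 (fun=> 0) -> conv f h r = 0.
Proof. by move=> eh; apply: big1 => s _; rewrite eh mulr0. Qed.

Lemma commr_conv x f h :
  (forall s, GRing.comm x (f s)) -> (forall s, GRing.comm x (h s)) ->
  forall r, GRing.comm x (conv f h r).
Proof. by move=> cf ch r; apply: commr_sum => s _; apply: commrM. Qed.

Lemma conv_eq0l g f u : u * g 0%N = 1 -> conv g f =1 (fun=> 0) -> f =1 (fun=> 0).
Proof.
move=> gK h0; elim/ltn_ind=> r IH.
have := h0 r; rewrite /conv big_nat_recl // subn0 big_nat big1 ?addr0 => [hr|s /andP[_ sr]].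
  by rewrite -[f r]mul1r -gK -mulrA hr mulr0.
by rewrite IH ?mulr0 // ltn_subrL (leq_ltn_trans _ sr).
Qed.

Lemma conv_eq0r f g u : g 0%N * u = 1 -> conv f g =1 (fun=> 0) -> f =1 (fun=> 0).
Proof.
move=> gK h0; elim/ltn_ind=> r IH.
have := h0 r; rewrite /conv big_nat_recr //= subnn big_nat big1 ?add0r => [hr|s /andP[_ sr]].
  by rewrite -[f r]mulr1 -gK mulrA hr mul0r.
by rewrite IH ?mul0r.
Qed.

Lemma commr_conv_cancell x g f u :
  u * g 0%N = 1 -> (forall s, GRing.comm x (g s)) ->
  (forall r, GRing.comm x (conv g f r)) -> forall r, GRing.comm x (f r).
Proof.
move=> gK cg cgf.
suff d0 : (fun s => x * f s - f s * x) =1 (fun=> 0) by move=> r; apply/subr0_eq/d0.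
apply: (conv_eq0l gK) => r.
rewrite /conv; under eq_bigr => s _ do rewrite mulrBr !mulrA -cg -mulrA.
by rewrite sumrB -mulr_sumr -mulr_suml (cgf r) subrr.
Qed.

Lemma commr_conv_cancelr x f g u :
  g 0%N * u = 1 -> (forall s, GRing.comm x (g s)) ->
  (forall r, GRing.comm x (conv f g r)) -> forall r, GRing.comm x (f r).
Proof.
move=> gK cg cfg.
suff d0 : (fun s => x * f s - f s * x) =1 (fun=> 0) by move=> r; apply/subr0_eq/d0.
apply: (conv_eq0r gK) => r.
rewrite /conv; under eq_bigr => s _ do
  rewrite mulrBl -mulrA -[f s * x * _]mulrA cg [f s * (_ * x)]mulrA.
by rewrite sumrB -mulr_sumr -mulr_suml (cfg r) subrr.
Qed.

End Convolution.

Section TwistedCommutator.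
Variables (R : pzRingType) (A : algType R).
Implicit Types (x y : A) (w k : R).

Definition qcomm w x y : A := x * y - w *: (y * x).

Lemma qcommr_sum w x I (s : seq I) (B : pred I) (F : I -> A) :
  qcomm w x (\sum_(i <- s | B i) F i) = \sum_(i <- s | B i) qcomm w x (F i).
Proof. by rewrite /qcomm sumrB mulr_sumr mulr_suml scaler_sumr. Qed.

Lemma qcomml_sum w x I (s : seq I) (B : pred I) (F : I -> A) :
  qcomm w (\sum_(i <- s | B i) F i) x = \sum_(i <- s | B i) qcomm w (F i) x.
Proof. by rewrite /qcomm sumrB mulr_sumr mulr_suml scaler_sumr. Qed.

Lemma conv_qcommr w k x (P Q Q' : nat -> A) :
  (forall s, GRing.comm x (P s)) ->
  conv P (fun s => qcomm w x (Q s) - k *: Q' s)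
  =1 (fun r => qcomm w x (conv P Q r) - k *: conv P Q' r).
Proof.
move=> cP r; rewrite /conv qcommr_sum scaler_sumr -sumrB; apply: eq_bigr => s _.
by rewrite /qcomm !mulrBr -!scalerAr !mulrA cP.
Qed.

Lemma conv_qcomml w k x (P Q Q' : nat -> A) :
  (forall s, GRing.comm x (P s)) ->
  conv (fun s => qcomm w (Q s) x - k *: Q' s) P
  =1 (fun r => qcomm w (conv Q P r) x - k *: conv Q' P r).
Proof.
move=> cP r; rewrite /conv qcomml_sum scaler_sumr -sumrB; apply: eq_bigr => s _.
by rewrite /qcomm !mulrBl -!scalerAl -!mulrA cP.
Qed.

Lemma commr_inv x y (u : A) :
  u * x = 1 -> x * u = 1 -> GRing.comm x y -> GRing.comm u y.
Proof.
move=> ux xu cxy; rewrite /GRing.comm -[u * y]mulr1 -xu mulrA -(mulrA u) -cxy.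
by rewrite mulrA ux mul1r.
Qed.

Lemma qcommute_inv w (x t u : A) :
  u * t = 1 -> t * u = 1 -> x * t = w *: (t * x) -> u * x = w *: (x * u).
Proof.
move=> ut tu xt; rewrite -[u * x]mulr1 -tu mulrA -(mulrA u) xt -scalerAr mulrA ut.
by rewrite mul1r -scalerAl.
Qed.

End TwistedCommutator.

Section Ordinals.
Variable n : nat.
Implicit Types (a b c k : 'I_n).

Lemma ord_ltn_eqF a b : (a < b)%N -> (a == b) = false.
Proof. by move=> ab; rewrite -val_eqE ltn_eqF. Qed.

Lemma ord_ltn_ind (P : 'I_n -> Prop) :
  (forall k, (forall c, (c < k)%N -> P c) -> P k) -> forall k, P k.
Proof.
move=> IH; suff hN N k : (k < N)%N -> P k by move=> k; apply: hN (ltnSn k).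
by elim: N k => // N IHN k kN; apply: IH => c ck; apply: IHN (leq_trans ck kN).
Qed.

End Ordinals.

Section GaussDecomposition.
Variables (K : fieldType) (A : algType K) (n : nat).
Implicit Types (F E : 'I_n -> 'I_n -> nat -> A) (a b c j k : 'I_n).

Lemma Fmat_diag F k : Fmat F k k =1 delta0 A.
Proof. by move=> s; rewrite /Fmat ltnn eqxx. Qed.

Lemma Emat_diag E k : Emat E k k =1 delta0 A.
Proof. by move=> s; rewrite /Emat ltnn eqxx. Qed.

Lemma Fmat_eq0 F a c : (a < c)%N -> Fmat F a c =1 (fun=> 0).
Proof. by move=> ac s; rewrite /Fmat ltnNge ltnW //= ord_ltn_eqF. Qed.

Lemma Emat_eq0 E c b : (b < c)%N -> Emat E c b =1 (fun=> 0).
Proof. by move=> bc s; rewrite /Emat ltnNge ltnW //= eq_sym ord_ltn_eqF. Qed.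

Variables (F E : 'I_n -> 'I_n -> nat -> A) (g : 'I_n -> nat -> A).
Hypothesis g0_unit : forall c, exists2 u, u * g c 0%N = 1 & g c 0%N * u = 1.

Lemma gauss_cancel_lower (D : 'I_n -> nat -> A) (m : nat) :
  (forall j r, (j < m)%N -> \sum_c conv (Fmat F j c) (conv (g c) (D c)) r = 0) ->
  forall j, (j < m)%N -> D j =1 (fun=> 0).
Proof.
move=> hD; elim/ord_ltn_ind => j IH jm; have [u ug _] := g0_unit j.
apply: (conv_eq0l ug) => r; rewrite -(hD j r jm) (bigD1 j) //= big1 ?addr0.
  by rewrite (conv_delta0l _ (Fmat_diag F j)).
move=> c cj; case: (ltngtP c j) => [lt|gt|eq]; last by rewrite (val_inj eq) eqxx in cj.
  by apply: conv0r => s; apply: conv0r; apply: IH (ltn_trans lt jm).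
by apply: conv0l; apply: Fmat_eq0.
Qed.

Lemma gauss_cancel_upper (D : 'I_n -> nat -> A) (m : nat) :
  (forall j r, (j < m)%N -> \sum_c conv (D c) (conv (g c) (Emat E c j)) r = 0) ->
  forall j, (j < m)%N -> D j =1 (fun=> 0).
Proof.
move=> hD; elim/ord_ltn_ind => j IH jm; have [u _ gu] := g0_unit j.
apply: (conv_eq0r gu) => r; rewrite -(hD j r jm) (bigD1 j) //= big1 ?addr0.
  by apply: eq_conv => // s; rewrite (conv_delta0r _ (Emat_diag E j)).
move=> c cj; case: (ltngtP c j) => [lt|gt|eq]; last by rewrite (val_inj eq) eqxx in cj.
  by apply: conv0l; apply: IH (ltn_trans lt jm).
by apply: conv0r => s; apply: conv0r; apply: Emat_eq0.
Qed.

Variable X : 'I_n -> 'I_n -> nat -> A.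
Hypothesis gaussX : gauss_decomp X F g E.

Lemma gauss_decompE a b r :
  X a b r = \sum_c conv (Fmat F a c) (conv (g c) (Emat E c b)) r.
Proof.
rewrite gaussX; apply: eq_bigr => c _; apply: eq_bigr => r1 _.
by rewrite /conv mulr_sumr; apply: eq_bigr => r2 _; rewrite mulrA.
Qed.

Lemma gauss_coef0 a b : X a b 0%N = \sum_c Fmat F a c 0%N * g c 0%N * Emat E c b 0%N.
Proof. by rewrite gaussX; apply: eq_bigr => c _; rewrite !big_nat1. Qed.

Lemma gauss_coef0_Fid a b :
  (forall x y, F x y 0%N = 0) -> X a b 0%N = g a 0%N * Emat E a b 0%N.
Proof.
move=> F0; rewrite gauss_coef0 (bigD1 a) //= Fmat_diag mul1r big1 ?addr0 // => c ca.
by rewrite /Fmat F0 eq_sym (negbTE ca) if_same !mul0r.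
Qed.

Lemma gauss_coef0_Eid a b :
  (forall x y, E x y 0%N = 0) -> X a b 0%N = Fmat F a b 0%N * g b 0%N.
Proof.
move=> E0; rewrite gauss_coef0 (bigD1 b) //= Emat_diag mulr1 big1 ?addr0 // => c cb.
by rewrite /Emat E0 (negbTE cb) if_same !mulr0.
Qed.

Lemma gauss_coef0_Fid_g a : (forall x y, F x y 0%N = 0) -> g a 0%N = X a a 0%N.
Proof. by move=> F0; rewrite gauss_coef0_Fid // Emat_diag mulr1. Qed.

Lemma gauss_coef0_Eid_g a : (forall x y, E x y 0%N = 0) -> g a 0%N = X a a 0%N.
Proof. by move=> E0; rewrite gauss_coef0_Eid // Fmat_diag mul1r. Qed.

Lemma gauss_coef0_Fid_E a b u : (forall x y, F x y 0%N = 0) ->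
  u * X a a 0%N = 1 -> (a < b)%N -> E a b 0%N = u * X a b 0%N.
Proof.
move=> F0 uX ab; rewrite gauss_coef0_Fid // mulrA gauss_coef0_Fid_g // uX mul1r.
by rewrite /Emat ab.
Qed.

Lemma gauss_coef0_Eid_F a b u : (forall x y, E x y 0%N = 0) ->
  X b b 0%N * u = 1 -> (b < a)%N -> F a b 0%N = X a b 0%N * u.
Proof.
move=> E0 Xu ba; rewrite gauss_coef0_Eid // -mulrA gauss_coef0_Eid_g // Xu mulr1.
by rewrite /Fmat ba.
Qed.

(* Induction on the pivot k: by triangularity, the k-th term of X a k and of X k a is the
   only one not yet known to commute with x. *)
Lemma gauss_centralizer (x : A) (m : nat) :
  (forall a b r, (a < m)%N -> (b < m)%N -> GRing.comm x (X a b r)) ->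
  forall k, (k < m)%N ->
    (forall r, GRing.comm x (g k r)) /\
    (forall a r, (a < m)%N -> GRing.comm x (Fmat F a k r) /\ GRing.comm x (Emat E k a r)).
Proof.
move=> cX; elim/ord_ltn_ind => k IH km.
have cterm c a b r : (c < k)%N -> (a < m)%N -> (b < m)%N ->
    GRing.comm x (conv (Fmat F a c) (conv (g c) (Emat E c b)) r).
  move=> ck am bm; have [cg cFE] := IH c ck (ltn_trans ck km).
  apply: commr_conv => s; first exact: (cFE a s am).1.
  by apply: commr_conv => t; [exact: cg | exact: (cFE b t bm).2].
have cpivot a b r : (a < m)%N -> (b < m)%N -> (a == k) || (b == k) ->
    GRing.comm x (conv (Fmat F a k) (conv (g k) (Emat E k b)) r).
  move=> am bm abk; have := cX a b r am bm; rewrite gauss_decompE (bigD1 k) //=.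
  set rest := \sum_(c < n | c != k) _ => ctot.
  rewrite -(addrK rest (conv _ _ r)); apply: commrB => //.
  apply: commr_sum => c ck; case: (ltngtP c k) => [lt|gt|eq].
  - exact: cterm.
  - rewrite [conv _ _ r](_ : _ = 0); first exact: commr0.
    case/orP: abk => /eqP ->; first by apply: conv0l; apply: Fmat_eq0.
    by apply: conv0r => s; apply: conv0r; apply: Emat_eq0.
  - by rewrite (val_inj eq) eqxx in ck.
have cg r : GRing.comm x (g k r).
  have := cpivot k k r km km; rewrite eqxx => /(_ isT).
  by rewrite (conv_delta0l _ (Fmat_diag F k)) (conv_delta0r _ (Emat_diag E k)).
have [u ug gu] := g0_unit k.
split=> // a r am; split.
  apply: (commr_conv_cancelr gu cg) => {}r.
  have := cpivot a k r am km; rewrite eqxx orbT => /(_ isT).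
  by rewrite (eq_conv (frefl _) (conv_delta0r _ (Emat_diag E k))).
apply: (commr_conv_cancell ug cg) => {}r.
have := cpivot k a r km am; rewrite eqxx => /(_ isT).
by rewrite (conv_delta0l _ (Fmat_diag F k)).
Qed.

Lemma gauss_qcommE (x : A) (w k : K) (m : nat) (b b' : 'I_n) :
  (forall a (p : 'I_n) r, (a < m)%N -> (p < m)%N -> GRing.comm x (X a p r)) ->
  (forall a r, (a < m)%N -> qcomm w x (X a b r) = k *: X a b' r) ->
  forall j r, (j < m)%N -> qcomm w x (Emat E j b r) = k *: Emat E j b' r.
Proof.
move=> cX hX; pose D c s := qcomm w x (Emat E c b s) - k *: Emat E c b' s.
suff D0 j : (j < m)%N -> D j =1 (fun=> 0) by move=> j r jm; apply/subr0_eq/D0.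
apply: gauss_cancel_lower => {}j r jm.
transitivity (qcomm w x (X j b r) - k *: X j b' r); last by rewrite hX // subrr.
rewrite !gauss_decompE qcommr_sum scaler_sumr -sumrB.
apply: eq_bigr => c _; case: (ltnP c m) => cm.
  have [cg cFE] := gauss_centralizer cX cm.
  rewrite (eq_conv (frefl _) (conv_qcommr w k _ _ cg)) conv_qcommr // => s.
  exact: (cFE j s jm).1.
have Fjc0 := Fmat_eq0 F (leq_trans jm cm).
by rewrite !(conv0l _ _ Fjc0) /qcomm mulr0 mul0r !scaler0 !subr0.
Qed.

Lemma gauss_qcommF (x : A) (w k : K) (m : nat) (a a' : 'I_n) :
  (forall b (q : 'I_n) r, (b < m)%N -> (q < m)%N -> GRing.comm x (X b q r)) ->
  (forall (q : 'I_n) r, (q < m)%N -> qcomm w (X a q r) x = k *: X a' q r) ->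
  forall j r, (j < m)%N -> qcomm w (Fmat F a j r) x = k *: Fmat F a' j r.
Proof.
move=> cX hX; pose D c s := qcomm w (Fmat F a c s) x - k *: Fmat F a' c s.
suff D0 j : (j < m)%N -> D j =1 (fun=> 0) by move=> j r jm; apply/subr0_eq/D0.
apply: gauss_cancel_upper => {}j r jm.
transitivity (qcomm w (X a j r) x - k *: X a' j r); last by rewrite hX // subrr.
rewrite !gauss_decompE qcomml_sum scaler_sumr -sumrB.
apply: eq_bigr => c _; case: (ltnP c m) => cm.
  have [cg cFE] := gauss_centralizer cX cm.
  rewrite conv_qcomml // => s; apply: commr_conv => // t.
  exact: (cFE j t jm).2.
have gEcj0 : conv (g c) (Emat E c j) =1 (fun=> 0).
  by move=> s; apply: conv0r; apply: Emat_eq0 (leq_trans jm cm).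
by rewrite !(conv0r _ _ gEcj0) /qcomm mulr0 mul0r !scaler0 !subr0.
Qed.

End GaussDecomposition.

Section RTTw.
Variables (K : fieldType) (A : algType K) (n : nat) (v : K).
Implicit Types (X Y t : 'I_n -> 'I_n -> A) (a b c d p q i : 'I_n).
Implicit Types (tp tm : 'I_n -> 'I_n -> nat -> A) (T : 'I_n -> 'I_n -> int -> A).

(* R_w, the coefficient of w in R_trig(z, w), is all of R_trig that survives when one
   factor contributes only its constant term; RTTw_rel X Y reads R_w X_1 Y_2 = Y_2 X_1 R_w. *)
Definition RTTw_rel X Y : Prop :=
  forall a b p q,
  \sum_(c < n) \sum_(d < n) (Rtrig_coef v a b c d).2 *: (X c p * Y d q)
  = \sum_(c < n) \sum_(d < n) (Rtrig_coef v c d p q).2 *: (Y b d * X a c).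

Lemma eq_RTTw_rel (X X' Y Y' : 'I_n -> 'I_n -> A) :
  RTTw_rel X Y ->
  (forall a b, X a b = X' a b) -> (forall a b, Y a b = Y' a b) -> RTTw_rel X' Y'.
Proof.
move=> rXY eX eY a b p q; have := rXY a b p q.
under eq_bigr => c _ do under eq_bigr => d _ do rewrite eX eY.
by under [in X in _ = X -> _]eq_bigr => c _ do under eq_bigr => d _ do rewrite eX eY.
Qed.

Lemma RTT_rel_plus_coef0 T tp :
  RTT_rel v T (ser_plus tp) -> forall k, RTTw_rel (fun c p => T c p k) (fun d q => tp d q 0%N).
Proof.
move=> H k a b p q; have := H a b p q k 1.
have Tw1 x y : ser_plus tp x y 1 = 0 by [].
have Tw0 x y : ser_plus tp x y (1 - 1) = tp x y 0%N by rewrite subrr.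
under eq_bigr => c _ do under eq_bigr => d _ do rewrite Tw1 Tw0 mulr0 scaler0 add0r.
by under [RHS]eq_bigr => c _ do under eq_bigr => d _ do rewrite Tw1 Tw0 mul0r scaler0 add0r.
Qed.

Lemma RTT_rel_minus_coef0 tm T :
  RTT_rel v (ser_minus tm) T -> forall l, RTTw_rel (fun c p => tm c p 0%N) (fun d q => T d q l).
Proof.
move=> H l a b p q; have := H a b p q 0 (l + 1).
have Tz1 x y : ser_minus tm x y (0 - 1) = 0 by [].
have Tz0 x y : ser_minus tm x y 0 = tm x y 0%N by [].
have Tw x y : T x y (l + 1 - 1) = T x y l by rewrite addrK.
under eq_bigr => c _ do under eq_bigr => d _ do rewrite Tz1 Tz0 Tw mul0r scaler0 add0r.
by under [RHS]eq_bigr => c _ do under eq_bigr => d _ do rewrite Tz1 Tz0 Tw mulr0 scaler0 add0r.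
Qed.

Lemma ser_plusN tp (r : nat) c p : ser_plus tp c p (- r%:Z) = tp c p r.
Proof. by rewrite /ser_plus oppr_le0 le0z_nat abszN absz_nat. Qed.

Lemma ser_minusE tm (r : nat) c p : ser_minus tm c p r%:Z = tm c p r.
Proof. by rewrite /ser_minus le0z_nat absz_nat. Qed.

Lemma rtt_relations_coef0 tp tm : rtt_relations v tp tm ->
  [/\ forall r, RTTw_rel (fun a p => tp a p r) (fun a p => tp a p 0%N),
       forall r, RTTw_rel (fun a p => tm a p r) (fun a p => tp a p 0%N),
       forall r, RTTw_rel (fun a p => tm a p 0%N) (fun a p => tp a p r) &
       forall r, RTTw_rel (fun a p => tm a p 0%N) (fun a p => tm a p r)].
Proof.
case=> _ _ Rpp Rmm Rmp; split=> r.
- exact: eq_RTTw_rel (RTT_rel_plus_coef0 Rpp (- r%:Z)) (ser_plusN tp r) (fun _ _ => erefl).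
- exact: eq_RTTw_rel (RTT_rel_plus_coef0 Rmp r%:Z) (ser_minusE tm r) (fun _ _ => erefl).
- exact: eq_RTTw_rel (RTT_rel_minus_coef0 Rmp (- r%:Z)) (fun _ _ => erefl) (ser_plusN tp r).
- exact: eq_RTTw_rel (RTT_rel_minus_coef0 Rmm r%:Z) (fun _ _ => erefl) (ser_minusE tm r).
Qed.

Lemma Rtrig_coef2E a b c d :
  (Rtrig_coef v a b c d).2 =
    (if (a, b) == (c, d) then (if a == b then - v^-1 else -1) else 0)
  + (if (a, b) == (d, c) then (if (b < a)%N then v - v^-1 else 0) else 0).
Proof.
rewrite /Rtrig_coef !xpair_eqE.
do ![case: eqP => //= ?]; subst; rewrite ?ltnn ?addr0 ?add0r //.
by case: ltngtP => // /val_inj ?; subst.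
Qed.

Lemma sum_pick2 (k : 'I_n -> 'I_n -> K) (G : 'I_n -> 'I_n -> A) c0 d0 :
  \sum_(c < n) \sum_(d < n) (if (c, d) == (c0, d0) then k c d else 0) *: G c d
  = k c0 d0 *: G c0 d0.
Proof.
rewrite pair_bigA (bigD1 (c0, d0)) //= eqxx big1 ?addr0 // => -[c d] /= /negbTE ->.
exact: scale0r.
Qed.

Lemma RTTw_relE X Y : RTTw_rel X Y -> forall a b p q,
    (if a == b then - v^-1 else -1) *: (X a p * Y b q)
  + (if (b < a)%N then v - v^-1 else 0) *: (X b p * Y a q)
  = (if p == q then - v^-1 else -1) *: (Y b q * X a p)
  + (if (p < q)%N then v - v^-1 else 0) *: (Y b p * X a q).
Proof.
move=> rXY a b p q; have := rXY a b p q.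
have swap c d : ((a, b) == (d, c)) = ((c, d) == (b, a)).
  by rewrite !xpair_eqE andbC (eq_sym b) (eq_sym a).
under eq_bigr => c _ do under eq_bigr => d _ do
  rewrite Rtrig_coef2E [(a, b) == _]eq_sym swap scalerDl.
under [RHS]eq_bigr => c _ do under eq_bigr => d _ do rewrite Rtrig_coef2E scalerDl.
under eq_bigr => c _ do rewrite big_split.
under [RHS]eq_bigr => c _ do rewrite big_split.
by rewrite !big_split /= !sum_pick2.
Qed.

Lemma RTTw_upper_qcomm X t (d : A) i i1 :
  v != 0 -> RTTw_rel X t -> (forall a b, (b < a)%N -> t a b = 0) ->
  d * t i i = 1 -> t i i * d = 1 -> i1 = i.+1 :> nat ->
  (forall a p, (a < i)%N -> (p < i)%N -> GRing.comm (d * t i i1) (X a p)) /\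
  (forall a, (a < i)%N -> qcomm v^-1 (d * t i i1) (X a i) = (v - v^-1) *: X a i1).
Proof.
move=> v0 rXt tup dt td i1E; have h := RTTw_relE rXt.
have ii1 : (i < i1)%N by rewrite i1E.
split=> [a p ai pi|a ai].
  have pi1 : (p < i1)%N by rewrite i1E ltnS ltnW.
  have cX q : (p < q)%N -> GRing.comm (t i q) (X a p).
    move=> pq; have := h a i p q; rewrite !ord_ltn_eqF // (leq_gtF (ltnW ai)) pq.
    by rewrite (tup i p pi) mul0r scale0r !scaler0 !addr0 !scaleN1r => /oppr_inj.
  apply: commr_sym; apply: commrM; apply: commr_sym; last exact: cX.
  by apply: (commr_inv dt td); apply: cX.
have Xt : X a i * t i i = v^-1 *: (t i i * X a i).
  have := h a i i i; rewrite ord_ltn_eqF // (leq_gtF (ltnW ai)) eqxx ltnn.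
  by rewrite !scale0r !addr0 scaleN1r scaleNr => /oppr_inj.
have dX : X a i * d = v *: (d * X a i).
  by rewrite (qcommute_inv dt td Xt) scalerA mulfV // scale1r.
have tX : t i i1 * X a i - X a i * t i i1 = (v - v^-1) *: (t i i * X a i1).
  have := h a i i i1; rewrite !ord_ltn_eqF // (leq_gtF (ltnW ai)) ii1.
  rewrite scale0r addr0 !scaleN1r => e.
  by rewrite -(addKr (- (t i i1 * X a i)) ((v - v^-1) *: (t i i * X a i1))) -e opprK.
rewrite /qcomm mulrA dX -scalerAl scalerA mulVf // scale1r -!mulrA -mulrBr tX.
by rewrite -scalerAr mulrA dt mul1r.
Qed.

Lemma RTTw_lower_qcomm Y s (d : A) i i1 :
  v != 0 -> RTTw_rel s Y -> (forall a b, (a < b)%N -> s a b = 0) ->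
  d * s i i = 1 -> s i i * d = 1 -> i1 = i.+1 :> nat ->
  (forall b q, (b < i)%N -> (q < i)%N -> GRing.comm (s i1 i * d) (Y b q)) /\
  (forall q, (q < i)%N -> qcomm v (Y i q) (s i1 i * d) = (v^-1 - v) *: Y i1 q).
Proof.
move=> v0 rsY slow ds sd i1E; have h := RTTw_relE rsY.
have ii1 : (i < i1)%N by rewrite i1E.
split=> [b q bi qi|q qi].
  have cS a : (i <= a)%N -> GRing.comm (s a i) (Y b q).
    move=> ia; have ba := leq_trans bi ia; have := h a b i q.
    rewrite [a == b]eq_sym [i == q]eq_sym !ord_ltn_eqF // ba (leq_gtF (ltnW qi)).
    by rewrite (slow b i bi) mul0r !scaler0 scale0r !addr0 !scaleN1r => /oppr_inj.
  apply: commr_sym; apply: commrM; apply: commr_sym; first exact: cS (ltnW ii1).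
  by apply: (commr_inv ds sd); apply: cS.
have Ys : Y i q * s i i = v^-1 *: (s i i * Y i q).
  have := h i i i q; rewrite eqxx ltnn [i == q]eq_sym ord_ltn_eqF // (leq_gtF (ltnW qi)).
  by rewrite !scale0r !addr0 scaleN1r scaleNr => /oppr_inj.
have Yd : Y i q * d = v *: (d * Y i q).
  by rewrite (qcommute_inv ds sd Ys) scalerA mulfV // scale1r.
have sY1 : GRing.comm (s i i) (Y i1 q).
  have := h i i1 i q; rewrite ord_ltn_eqF // (leq_gtF (ltnW ii1)) [i == q]eq_sym ord_ltn_eqF //.
  by rewrite (leq_gtF (ltnW qi)) !scale0r !addr0 !scaleN1r => /oppr_inj.
have sY : s i1 i * Y i q - Y i q * s i1 i = (v - v^-1) *: (s i i * Y i1 q).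
  have := h i1 i i q; rewrite [i1 == i]eq_sym ord_ltn_eqF // ii1 [i == q]eq_sym ord_ltn_eqF //.
  rewrite (leq_gtF (ltnW qi)) scale0r addr0 !scaleN1r => e.
  by rewrite -(addKr (- (s i1 i * Y i q)) ((v - v^-1) *: (s i i * Y i1 q))) e opprK.
rewrite /qcomm -mulrA scalerAr -Yd !mulrA -mulrBl -opprB sY mulNr -scalerAl sY1.
by rewrite -mulrA sd mulr1 -scaleNr opprB.
Qed.

End RTTw.

Section GaussRecursion.
Variables (K : fieldType) (A : algType K) (n : nat) (v : K).
Variables (X F E : 'I_n -> 'I_n -> nat -> A) (g : 'I_n -> nat -> A).
Hypothesis v_neq0 : v != 0.
Hypothesis gaussX : gauss_decomp X F g E.
Hypothesis g0_unit : forall c, exists2 u, u * g c 0%N = 1 & g c 0%N * u = 1.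
Variables (i j i1 : 'I_n).
Hypotheses (ji : (j < i)%N) (i1E : i1 = i.+1 :> nat).

Lemma gauss_e_recursion (t : 'I_n -> 'I_n -> A) (d : A) :
  (forall r, RTTw_rel v (fun a p => X a p r) t) -> (forall a b : 'I_n, (b < a)%N -> t a b = 0) ->
  d * t i i = 1 -> t i i * d = 1 ->
  forall r, qcomm v^-1 (d * t i i1) (E j i r) = (v - v^-1) *: E j i1 r.
Proof.
move=> rXt tup dt td r.
have rels r' := RTTw_upper_qcomm v_neq0 (rXt r') tup dt td i1E.
have := gauss_qcommE g0_unit gaussX (fun a p r' => (rels r').1 a p)
  (fun a r' => (rels r').2 a) r ji.
by rewrite /Emat ji (ltn_trans ji) ?i1E.
Qed.

Lemma gauss_f_recursion (s : 'I_n -> 'I_n -> A) (d : A) :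
  (forall r, RTTw_rel v s (fun a p => X a p r)) -> (forall a b : 'I_n, (a < b)%N -> s a b = 0) ->
  d * s i i = 1 -> s i i * d = 1 ->
  forall r, qcomm v (F i j r) (s i1 i * d) = (v^-1 - v) *: F i1 j r.
Proof.
move=> rsX slow ds sd r.
have rels r' := RTTw_lower_qcomm v_neq0 (rsX r') slow ds sd i1E.
have := gauss_qcommF g0_unit gaussX (fun b q r' => (rels r').1 b q)
  (fun q r' => (rels r').2 q) r ji.
by rewrite /Fmat ji (ltn_trans ji) ?i1E.
Qed.

End GaussRecursion.

Lemma vq_neq0 : vq != 0.
Proof. by rewrite /vq tofrac_eq0 polyX_eq0. Qed.

Lemma vq_subV_neq0 : vq - vq^-1 != 0.
Proof.
apply/eqP => /subr0_eq vqV; have : vq * vq = 1 by rewrite {1}vqV mulVf ?vq_neq0.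
rewrite /vq -rmorphM -tofrac1 => /eqP; rewrite tofrac_eq => /eqP.
move/(congr1 (fun p : {poly Cnum} => p`_0)); rewrite coefMX coef1 /= => /eqP.
by rewrite eq_sym oner_eq0.
Qed.

Theorem proposition3p21 (A : algType Cv) (n : nat)
    (tp tm : 'I_n -> 'I_n -> nat -> A)
    (fp fm : 'I_n -> 'I_n -> nat -> A) (gp gm : 'I_n -> nat -> A)
    (ep em : 'I_n -> 'I_n -> nat -> A) :
  rtt_relations vq tp tm ->
  gauss_decomp tp fp gp ep ->
  gauss_decomp tm fm gm em ->
  (* f^+_{ij}(z) = sum_{r>0} f^{(r)} z^{-r} : no constant term *)
  (forall i j : 'I_n, fp i j 0%N = 0) ->
  (* e^-_{ij}(z) = sum_{r<0} e^{(r)} z^{-r} : no constant term *)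
  (forall i j : 'I_n, em i j 0%N = 0) ->
  forall (i j i1 : 'I_n), (j < i)%N -> val i1 = (val i).+1 ->
  (forall r : nat,
     ep j i1 r = (vq - vq^-1)^-1 *: (ep i i1 0%N * ep j i r - vq^-1 *: (ep j i r * ep i i1 0%N))
  /\ em j i1 r = (vq - vq^-1)^-1 *: (ep i i1 0%N * em j i r - vq^-1 *: (em j i r * ep i i1 0%N))
  /\ fp i1 j r = (vq^-1 - vq)^-1 *: (fp i j r * fm i1 i 0%N - vq *: (fm i1 i 0%N * fp i j r))
  /\ fm i1 j r = (vq^-1 - vq)^-1 *: (fm i j r * fm i1 i 0%N - vq *: (fm i1 i 0%N * fm i j r))).
Proof.
move=> rels gaussp gaussm fp0 em0 i j i1 ji i1E r.
have [Rpp Rmp Rpm Rmm] := rtt_relations_coef0 rels; case: rels => tinv ttri _ _ _.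
have k0 := vq_subV_neq0; have k0' : vq^-1 - vq != 0 by rewrite -opprB oppr_eq0.
have gp_unit c : exists2 u, u * gp c 0%N = 1 & gp c 0%N * u = 1.
  by exists (tm c c 0%N); rewrite (gauss_coef0_Fid_g gaussp); case: (tinv c).
have gm_unit c : exists2 u, u * gm c 0%N = 1 & gm c 0%N * u = 1.
  by exists (tp c c 0%N); rewrite (gauss_coef0_Eid_g gaussm); case: (tinv c).
have tup (a b : 'I_n) (ba : (b < a)%N) : tp a b 0%N = 0 := (ttri a b ba).1.
have tlow (a b : 'I_n) (ab : (a < b)%N) : tm a b 0%N = 0 := (ttri b a ab).2.
have [tpm tmp] := tinv i; have ii1 : (i < i1)%N by rewrite i1E.
rewrite (gauss_coef0_Fid_E gaussp fp0 tmp ii1) (gauss_coef0_Eid_F gaussm em0 tmp ii1).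
split; [|split; [|split]].
- apply: (canRL (scalerK k0)).
  by rewrite -(gauss_e_recursion vq_neq0 gaussp gp_unit ji i1E Rpp tup tmp tpm r).
- apply: (canRL (scalerK k0)).
  by rewrite -(gauss_e_recursion vq_neq0 gaussm gm_unit ji i1E Rmp tup tmp tpm r).
- apply: (canRL (scalerK k0')).
  by rewrite -(gauss_f_recursion vq_neq0 gaussp gp_unit ji i1E Rpm tlow tpm tmp r).
- apply: (canRL (scalerK k0')).
  by rewrite -(gauss_f_recursion vq_neq0 gaussm gm_unit ji i1E Rmm tlow tpm tmp r).
Qed.
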